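(* Let $M$ be a $3$-connected simple matroid with $r(M)\ge 4$, and let $K=x_1,\dots,x_n,y_1,\dots,y_n$ ($n\ge3$) be a carambole of $M$ with filament $L=\{y_1,\dots,y_n\}$ and hull $X=\{x_1,\dots,x_n\}$. Let $C$ be a circuit of $M$ with $C\not\subseteq L$. Then: (a) If $C$ meets $\{x_1,\dots,x_n,y_1,\dots,y_n\}$, then either (a.1) $X\subseteq C$ and $(C-L)\cup A$ is a circuit of $M$ for each $2$-element subset $A$ of $L$; or (a.2) for some $l\in\{1,\dots,n\}$, $X-C=\{x_l\}$, $(C-L)\cup y_l$ is a circuit of $M$, and $(C-L)\cup A$ is a circuit of $M$ for each $2$-element subset $A$ of $L-y_l$. (b) $C-L$ is a circuit of $M/L$.
   Context: A line of $M$ is a rank-$2$ set. For $n\ge3$, a sequence $x_1,\dots,x_n,y_1,\dots,y_n$ of elements of $M$ is a carambole of $M$ if $L:=\{y_1,\dots,y_n\}$ is a line of $M$ with $n$ distinct elements such that $\mathrm{si}(M/L)$ (the simplification) is $3$-connected, and, for each $i$, $(L-y_i)\cup x_i$ is a cocircuit of $M$. $L$ is the filament and $X:=\{x_1,\dots,x_n\}$ the hull of the carambole. *)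

From mathcomp Require Import all_boot.
Set Implicit Arguments. Unset Strict Implicit. Unset Printing Implicit Defensive.

Record matroid (E : finType) := Matroid {
  indep : {set E} -> bool;
  indep0 : indep set0;
  indep_sub : forall A B : {set E}, A \subset B -> indep B -> indep A;
  indep_aug : forall A B : {set E}, indep A -> indep B -> #|A| < #|B| ->
      exists2 e, e \in B :\: A & indep (e |: A)
}.

Section MatroidDefs.
Variables (E : finType) (M : matroid E).

Definition rank (X : {set E}) : nat :=
  \max_(Y : {set E} | (Y \subset X) && indep M Y) #|Y|.

Definition circuit (C : {set E}) : bool :=
  ~~ indep M C && [forall e in C, indep M (C :\ e)].

(* cocircuits = circuits of the dual: minimal sets D that are not coindependent,
   where D is coindependent iff r(E - D) = r(E). *)
Definition coindep (D : {set E}) : bool := rank (~: D) == rank setT.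
Definition cocircuit (D : {set E}) : bool :=
  ~~ coindep D && [forall e in D, coindep (D :\ e)].

(* Tutte 3-connectivity of the matroid on ground set S with rank function rk:
   no k-separation (A, S - A) for k = 1, 2, i.e. no A with |A|, |S - A| >= k and
   rk A + rk (S - A) - rk S < k. *)
Definition three_connected_rk (rk : {set E} -> nat) (S : {set E}) : Prop :=
  forall (A : {set E}) (k : nat), A \subset S -> 1 <= k < 3 ->
    ~ [/\ k <= #|A|, k <= #|S :\: A| & rk A + rk (S :\: A) < rk S + k].

Definition three_connected : Prop := three_connected_rk rank setT.

(* simple: no loops and no parallel pairs *)
Definition simple : Prop :=
  (forall e : E, indep M [set e]) /\ (forall e f : E, indep M [set e; f]).

Definition line (L : {set E}) : bool := rank L == 2.

(* contraction M/L, ground set E - L, rank r_{M/L}(X) = r(X u L) - r(L) *)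
Definition rank_con (L X : {set E}) : nat := rank (X :|: L) - rank L.
Definition indep_con (L X : {set E}) : bool :=
  (X \subset ~: L) && (rank (X :|: L) == #|X| + rank L).
Definition circuit_con (L C : {set E}) : bool :=
  (C \subset ~: L) && ~~ indep_con L C && [forall e in C, indep_con L (C :\ e)].

Definition loop_con (L : {set E}) (e : E) : bool := rank_con L [set e] == 0.
Definition parallel_con (L : {set E}) (e f : E) : bool :=
  [&& e != f, ~~ loop_con L e, ~~ loop_con L f & rank_con L [set e; f] == 1].

(* S is the ground set of a simplification of M/L: one representative of each
   parallel class of non-loops of M/L *)
Definition simplification_set (L S : {set E}) : Prop :=
  [/\ S \subset ~: L,
      forall e, e \in S -> ~~ loop_con L e,
      forall e f, e \in S -> f \in S -> ~~ parallel_con L e f &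
      forall e, e \in ~: L -> ~~ loop_con L e ->
        exists2 f, f \in S & (e == f) || parallel_con L e f].

(* si(M/L) is 3-connected (independent of the choice of representatives) *)
Definition si_con_three_connected (L : {set E}) : Prop :=
  exists S, simplification_set L S /\ three_connected_rk (rank_con L) S.

Definition carambole (n : nat) (x y : 'I_n -> E) : Prop :=
  let L := [set y i | i : 'I_n] in
  [/\ 3 <= n, injective y, line L, si_con_three_connected L &
      forall i : 'I_n, cocircuit ((L :\ y i) :|: [set x i])].

End MatroidDefs.

From mathcomp Require Import all_boot zify.
Set Implicit Arguments. Unset Strict Implicit. Unset Printing Implicit Defensive.

(* Everything is driven by the cocircuits D_i = (L - y_i) + x_i through two
   facts: a circuit never meets a cocircuit in exactly one element, and adding
   an element of a cocircuit D to a set disjoint from D raises its rank.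

   (b) Let k = #|C :&: L|; it is at most 2 since C :&: L is independent in the
   line L, and submodularity bounds r (C + L) by #|C| + 1 - k.  If C :&: L lies
   in {y_i}, then C meets D_i at most in x_i, hence avoids D_i; so adding L to
   C - e adds one (k = 1) or two (k = 0) to its rank.  These two bounds say
   that C - L is a circuit of M/L.

   (a) C - L is then independent.  At most one y_l is spanned by C - L, since
   two would span L; by the cocircuit D_l, y_l is spanned exactly when x_l is
   not in C, and then (C - L) + y_l is a circuit, while C - L plus any two
   unspanned y's is a circuit. *)

Lemma setU1D1 (T : finType) (a b : T) (A : {set T}) :
  a != b -> (a |: A) :\ b = a |: (A :\ b).
Proof.
by move=> ab; apply/setP => z; rewrite !inE; case: (eqVneq z a) => // ->; rewrite ab.
Qed.

Section MatroidRank.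
Variables (E : finType) (M : matroid E).
Implicit Types (A B I J P Z C D : {set E}) (e : E).
Local Notation r := (rank M).

Lemma indep_leq_rank A I : I \subset A -> indep M I -> #|I| <= r A.
Proof. by move=> sIA iI; apply: (bigmax_sup I) => //; rewrite sIA. Qed.

Lemma rank_leq_card A : r A <= #|A|.
Proof. by apply/bigmax_leqP => I /andP[sIA _]; apply: subset_leq_card. Qed.

Lemma exists_basis A : exists I, [/\ I \subset A, indep M I & #|I| = r A].
Proof.
have P0 : (set0 \subset A) && indep M set0 by rewrite sub0set indep0.
rewrite /rank (bigmax_eq_arg set0 P0).
by case: arg_maxnP => //= I /andP[sIA iI] _; exists I.
Qed.

Lemma indep_rankE A : indep M A = (r A == #|A|).
Proof.
apply/idP/eqP => [iA | rA].
  by apply/eqP; rewrite eqn_leq rank_leq_card (indep_leq_rank (subxx A)).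
have [I [sIA iI cI]] := exists_basis A.
have eIA : I == A by rewrite eqEcard sIA cI rA leqnn.
by rewrite -(eqP eIA).
Qed.

Lemma rank_mono A B : A \subset B -> r A <= r B.
Proof.
move=> sAB; have [I [sIA iI <-]] := exists_basis A.
exact: indep_leq_rank (subset_trans sIA sAB) iI.
Qed.

Lemma basis_extend I A : indep M I -> I \subset A ->
  exists J, [/\ I \subset J, J \subset A, indep M J & #|J| = r A].
Proof.
move=> iI sIA; move Hk: (r A - #|I|) => k.
elim: k I iI sIA Hk => [|k IH] I iI sIA Hk.
  exists I; split => //; apply/eqP; rewrite eqn_leq indep_leq_rank //=.
  by rewrite -subn_eq0 Hk.
have [B [sBA iB cB]] := exists_basis A.
have [e /setDP[eB eI] ieI] : exists2 e, e \in B :\: I & indep M (e |: I).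
  by apply: indep_aug iI iB _; rewrite cB -subn_gt0 Hk.
have [||J [sJ sJA iJ cJ]] := IH (e |: I) ieI.
- by rewrite subUset sub1set (subsetP sBA).
- by move: Hk; rewrite cardsU1 eI; lia.
by exists J; split => //; apply: subset_trans (subsetUr _ _) sJ.
Qed.

Lemma rank_setU_leq_card A B : r (A :|: B) <= r A + #|B|.
Proof.
have [J [sJ iJ <-]] := exists_basis (A :|: B).
rewrite -(cardsID A J); apply: leq_add.
  exact: indep_leq_rank (subsetIr _ _) (indep_sub (subsetIl _ _) iJ).
by apply: subset_leq_card; rewrite subDset.
Qed.

Lemma rank_setU1 A e : r (e |: A) <= (r A).+1.
Proof. by rewrite setUC -addn1 -(cards1 e) rank_setU_leq_card. Qed.

Lemma rank_submod A B : r (A :|: B) + r (A :&: B) <= r A + r B.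
Proof.
have [I [sI iI <-]] := exists_basis (A :&: B).
have [J [sIJ sJ iJ <-]] :=
  basis_extend iI (subset_trans sI (subset_trans (subsetIl A B) (subsetUl A B))).
have cI : #|I| <= #|(J :&: A) :&: (J :&: B)|.
  by apply: subset_leq_card; rewrite setIACA setIid subsetI sIJ.
have <- : (J :&: A) :|: (J :&: B) = J by rewrite -setIUr; apply/setIidPl.
apply: leq_trans (leq_add (leqnn _) cI) _; rewrite cardsUI.
by apply: leq_add; apply: indep_leq_rank (subsetIr _ _) (indep_sub (subsetIl _ _) iJ).
Qed.

Lemma rank_setU_spanning A B P :
  P \subset B -> r B <= r P -> r (A :|: B) = r (A :|: P).
Proof.
move=> sPB rBP; apply/eqP; rewrite eqn_leq (rank_mono (setUS A sPB)) andbT.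
have := rank_submod (A :|: P) B.
rewrite -setUA (setUidPr sPB).
have : r P <= r ((A :|: P) :&: B) by apply: rank_mono; rewrite subsetI subsetUr sPB.
lia.
Qed.

Lemma rank_setU1_spanned A B e : A \subset B -> r (e |: A) = r A -> r (e |: B) = r B.
Proof.
move=> sAB eA; have := rank_setU_spanning B (subsetUr [set e] A) (eq_leq eA).
by rewrite setUCA (setUidPl sAB).
Qed.

Lemma rank_setU1_cases A e : r (e |: A) = r A \/ r (e |: A) = (r A).+1.
Proof.
have := rank_setU1 A e; have := rank_mono (subsetUr [set e] A); lia.
Qed.

Lemma circuit_indepD1 C e : circuit M C -> e \in C -> indep M (C :\ e).
Proof. by case/andP => _ /forallP/(_ e)/implyP. Qed.

Lemma circuit_rank C : circuit M C -> (r C).+1 = #|C|.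
Proof.
move=> cC; have /andP[dC _] := cC.
have /set0Pn[e eC] : C != set0 by apply: contraNneq dC => ->; apply: indep0.
have := rank_setU1 (C :\ e) e; have := rank_mono (subsetDl C [set e]).
have := circuit_indepD1 cC eC; rewrite setD1K // !indep_rankE in dC * => /eqP.
by move/eqP: dC; rewrite (cardsD1 e C) eC; lia.
Qed.

Lemma cocircuit_rank_setU1 D Z e : cocircuit M D -> Z \subset ~: D -> e \in D ->
  r (e |: Z) = (r Z).+1.
Proof.
case/andP => nD /forallP/(_ e)/implyP cDe sZ eD.
have [eZ|//] := rank_setU1_cases Z e.
have := rank_setU1_spanned sZ eZ.
rewrite setUC -setCD; move/eqP: (cDe eD) => ->.
by move: nD; rewrite /coindep => /eqP nD /esym.
Qed.

Lemma circuit_cocircuit_meet C D e : circuit M C -> cocircuit M D -> C :&: D != [set e].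
Proof.
move=> cC cD; apply/eqP => CD.
have /setIP[eC eD] : e \in C :&: D by rewrite CD set11.
have sCD : C :\ e \subset ~: D.
  apply/subsetP => z /setD1P[ze zC]; rewrite inE; apply: contra ze => zD.
  by rewrite -in_set1 -CD inE zC.
have := cocircuit_rank_setU1 cD sCD eD; rewrite setD1K //.
have := circuit_rank cC; have := circuit_indepD1 cC eC; rewrite indep_rankE => /eqP->.
by rewrite (cardsD1 e C) eC; lia.
Qed.

Lemma three_connected_rank_setC L : three_connected M -> r L = 2 -> 4 <= r setT ->
  r (~: L) = r setT.
Proof.
move=> H3 rL r4; have := H3 L 2 (subsetT L) isT; rewrite setTD => no2sep.
have := rank_setU_leq_card L (~: L); rewrite setUCr rL => cL.
have := rank_leq_card L; rewrite rL => cL'.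
apply/eqP; rewrite eqn_leq (rank_mono (subsetT _)) /= leqNgt; apply/negP => lt.
by apply: no2sep; split; lia.
Qed.

Lemma cocircuit_not_subset D L :
  r (~: L) = r setT -> cocircuit M D -> ~~ (D \subset L).
Proof.
move=> rL /andP[nD _]; apply: contra nD => sDL.
by rewrite /coindep eqn_leq (rank_mono (subsetT _)) -rL rank_mono // setCS.
Qed.

Lemma circuit_con_rank L C' : circuit_con M L C' ->
  (r (C' :|: L)).+1 = #|C'| + r L /\
  forall e, e \in C' -> (r ((C' :\ e) :|: L)).+1 = #|C'| + r L.
Proof.
case/andP => /andP[sC' dC'] /forallP iC'.
have iC'e e : e \in C' -> (r ((C' :\ e) :|: L)).+1 = #|C'| + r L.
  move=> eC; have /andP[_ /eqP ->] := implyP (iC' e) eC.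
  by rewrite (cardsD1 e C') eC.
split=> //.
have /set0Pn[e eC] : C' != set0.
  by apply: contraNneq dC' => ->; rewrite /indep_con sub0set set0U cards0 eqxx.
have := iC'e e eC; have := rank_setU1 ((C' :\ e) :|: L) e.
have := rank_mono (setSU L (subsetDl C' [set e])).
rewrite setUA setD1K //; move: dC'; rewrite /indep_con sC' => /eqP; lia.
Qed.

Lemma circuit_con_of_rank L C' : C' \subset ~: L ->
  r (C' :|: L) < #|C'| + r L ->
  (forall e, e \in C' -> #|C'| + r L <= (r ((C' :\ e) :|: L)).+1) ->
  circuit_con M L C'.
Proof.
move=> sC' up lo; rewrite /circuit_con /indep_con sC' (ltn_eqF up) /=.
apply/forallP => e; apply/implyP => eC; rewrite (subset_trans (subsetDl _ _) sC') /=.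
have := lo e eC; have := rank_mono (setSU L (subsetDl C' [set e])).
move: up; rewrite (cardsD1 e C') eC add1n => *; apply/eqP; lia.
Qed.

End MatroidRank.

Section Carambole.
Variables (E : finType) (M : matroid E) (n : nat) (x y : 'I_n -> E).
Implicit Types (A C Z : {set E}) (i j a b : 'I_n).
Local Notation r := (rank M).
Local Notation L := [set y i | i : 'I_n].
Local Notation D i := ((L :\ y i) :|: [set x i]).
Hypotheses (n_gt1 : 1 < n) (y_inj : injective y) (rank_L : r L = 2)
  (pair_indep : forall e f : E, indep M [set e; f])
  (x_notin_L : forall i, x i \notin L) (D_cocircuit : forall i, cocircuit M (D i)).

Lemma exists_neq (i : 'I_n) : exists j, j != i.
Proof.
have : 0 < #|[set~ i]| by rewrite cardsC1 card_ord; lia.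
by case/card_gt0P => j; rewrite !inE; exists j.
Qed.

Lemma mem_y_D i j : (y j \in D i) = (j != i).
Proof.
rewrite !inE imset_f // andbT (inj_eq y_inj).
case: (eqVneq (y j) (x i)) => [yx|_]; last by rewrite orbF.
by have := x_notin_L i; rewrite -yx imset_f.
Qed.

Lemma subset_L_card2 A : A \subset L -> #|A| = 2 ->
  exists a b, a != b /\ A = [set y a; y b].
Proof.
move=> sAL /eqP /cards2P [u [v [uv eA]]].
have /imsetP[a _ ua] : u \in L by apply: (subsetP sAL); rewrite eA !inE eqxx.
have /imsetP[b _ vb] : v \in L by apply: (subsetP sAL); rewrite eA !inE eqxx orbT.
subst u v.
by exists a, b; split=> //; apply: contraNneq uv => ->.
Qed.

Lemma rank_setU_L Z a b : a != b -> r (Z :|: L) = r (Z :|: [set y a; y b]).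
Proof.
move=> ab; apply: rank_setU_spanning; first by rewrite subUset !sub1set !imset_f.
move: (pair_indep (y a) (y b)); rewrite indep_rankE cards2 (inj_eq y_inj) ab.
by move/eqP->; rewrite rank_L.
Qed.

Lemma rank_setU_L_avoiding_cocircuit Z a :
  Z \subset ~: D a -> (r Z).+1 <= r (Z :|: L).
Proof.
move=> sZ; have [j ja] := exists_neq a.
rewrite -(cocircuit_rank_setU1 (e := y j) (D_cocircuit a) sZ) ?mem_y_D //.
by apply: rank_mono; rewrite setUC setUS // sub1set imset_f.
Qed.

Lemma rank_setU_L_avoiding_cocircuits Z a b :
  a != b -> Z \subset ~: D a -> Z \subset ~: D b -> (r Z).+2 <= r (Z :|: L).
Proof.
move=> ab sZa sZb.
have sZa' : y a |: Z \subset ~: D a by rewrite subUset sub1set inE mem_y_D eqxx sZa.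
rewrite -(cocircuit_rank_setU1 (e := y a) (D_cocircuit b) sZb) ?mem_y_D //.
rewrite -(cocircuit_rank_setU1 (e := y b) (D_cocircuit a) sZa') ?mem_y_D 1?eq_sym //.
by apply: rank_mono; rewrite setUA setUC setUS // subUset !sub1set !imset_f.
Qed.

Lemma circuit_subset_setC_D C i : circuit M C -> C :&: L \subset [set y i] ->
  C \subset ~: D i.
Proof.
move=> cC sCL; apply/subsetP => z zC; rewrite inE; apply/negP => zD.
have : C :&: D i \subset [set x i].
  apply/subsetP => w /setIP[wC]; rewrite !inE => /orP[/andP[wy wL]|//].
  by have := subsetP sCL w; rewrite !inE wC wL (negPf wy) => /(_ isT).
rewrite subset1 => /orP[/eqP CD|/eqP CD0].
  by have := circuit_cocircuit_meet (x i) cC (D_cocircuit i); rewrite CD eqxx.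
have : z \in C :&: D i by rewrite inE zC zD.
by rewrite CD0 inE.
Qed.

Lemma circuit_meet_L_indep C : circuit M C -> ~~ (C \subset L) -> indep M (C :&: L).
Proof.
move=> cC /subsetPn[e eC eL]; apply: indep_sub (circuit_indepD1 cC eC).
by apply/subsetP => z /setIP[zC zL]; rewrite !inE zC andbT; apply: contraNneq eL => <-.
Qed.

Lemma circuit_rank_setD1_setU_L C e : circuit M C -> e \in C ->
  #|C|.+1 <= r ((C :\ e) :|: L) + #|C :&: L|.
Proof.
move=> cC eC.
have rZ : (r (C :\ e)).+1 = #|C|.
  by move: (circuit_indepD1 cC eC); rewrite indep_rankE (cardsD1 e C) eC add1n => /eqP->.
have sZ i : C :&: L \subset [set y i] -> C :\ e \subset ~: D i.
  by move=> sCL; apply: subset_trans (subsetDl _ _) (circuit_subset_setC_D cC sCL).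
have [k2|k1] := leqP 2 #|C :&: L|.
  by have := rank_mono M (subsetUl (C :\ e) L); lia.
have [k0|k0] := posnP #|C :&: L|.
  have sCL i : C :&: L \subset [set y i] by rewrite (cards0_eq k0) sub0set.
  have [b ba] := exists_neq (Ordinal (ltnW n_gt1)).
  by have := rank_setU_L_avoiding_cocircuits ba (sZ _ (sCL b)) (sZ _ (sCL _)); lia.
have /cards1P[z CLz] : #|C :&: L| == 1 by rewrite eqn_leq -ltnS k1 k0.
have /setIP[_ /imsetP[m _ zm]] : z \in C :&: L by rewrite CLz set11.
have sCL : C :&: L \subset [set y m] by rewrite CLz zm.
by have := rank_setU_L_avoiding_cocircuit (sZ _ sCL); rewrite CLz cards1; lia.
Qed.

Lemma circuit_setD_L_con C :
  circuit M C -> ~~ (C \subset L) -> circuit_con M L (C :\: L).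
Proof.
move=> cC nCL.
have setDKU A : (A :\: L) :|: L = A :|: L.
  by rewrite setDE setUIl [~: L :|: L]setUC setUCr setIT.
have rCL : r (C :&: L) = #|C :&: L| by apply/eqP; rewrite -indep_rankE circuit_meet_L_indep.
have cardC := cardsID L C.
apply: circuit_con_of_rank; first by rewrite setDE subsetIr.
  by rewrite setDKU rank_L; have := rank_submod M C L; have := circuit_rank cC; lia.
move=> e /setDP[eC eL].
rewrite setDDl [L :|: _]setUC -setDDl setDKU rank_L.
by have := circuit_rank_setD1_setU_L cC eC; lia.
Qed.

Lemma circuit_meet_hull_indep C : circuit M C ->
  C :&: ([set x i | i : 'I_n] :|: L) != set0 -> indep M (C :\: L).
Proof.
move=> cC /set0Pn[z /setIP[zC zXL]].
have [/set0Pn[w /setIP[wC wL]]|/negPn/eqP CL0] := boolP (C :&: L != set0).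
  apply: indep_sub (circuit_indepD1 cC wC).
  by apply/subsetP => u /setDP[uC uL]; rewrite !inE uC andbT; apply: contraNneq uL => ->.
have zCL : z \notin C :&: L by rewrite CL0 inE.
case/setUP: zXL => [/imsetP[i _ zx]|zL]; last by rewrite inE zC zL in zCL.
have sCL : C :&: L \subset [set y i] by rewrite CL0 sub0set.
by have := subsetP (circuit_subset_setC_D cC sCL) z zC; rewrite inE zx !inE eqxx orbT.
Qed.

Section ContractedCircuit.
Variable C : {set E}.
Local Notation C' := (C :\: L).
Hypotheses (C'_indep : indep M C') (C'_con : circuit_con M L C').

Lemma rank_C' : r C' = #|C'|.
Proof. by apply/eqP; rewrite -indep_rankE. Qed.

Lemma rank_C'_setU_L : r (C' :|: L) = #|C'|.+1.
Proof. by have [] := circuit_con_rank C'_con; rewrite rank_L; lia. Qed.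

Lemma rank_C'D1_setU_L e : e \in C' -> r ((C' :\ e) :|: L) = #|C'|.+1.
Proof.
by move=> eC; have [_ /(_ e eC)] := circuit_con_rank C'_con; rewrite rank_L; lia.
Qed.

Lemma y_notin_C' i : y i \notin C'.
Proof. by rewrite inE imset_f. Qed.

Lemma C'D1_subset_setC_D i : C' :\ x i \subset ~: D i.
Proof.
apply/subsetP => z /setD1P[zx /setDP[_ zL]].
by rewrite !inE (negPf zx) (negPf zL) andbF.
Qed.

Lemma spanned_y_unique a b :
  r (y a |: C') = #|C'| -> r (y b |: C') = #|C'| -> a = b.
Proof.
move=> ha hb; case: (eqVneq a b) => // ab; have := rank_C'_setU_L.
rewrite (rank_setU_L _ ab) setUC -setUA setUCA.
have hb' : r (y b |: C') = r C' by rewrite hb rank_C'.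
rewrite (rank_setU1_spanned (subsetUr [set y a] C') hb') ha.
by move=> /n_Sn.
Qed.

Lemma rank_y_C'D1 b e : e \in C' -> #|C'| <= r (y b |: (C' :\ e)).
Proof.
move=> eC; have [j jb] := exists_neq b.
have := rank_C'D1_setU_L eC; rewrite (rank_setU_L _ (_ : b != j)) 1?eq_sym //.
rewrite setUC -setUA setUCA.
have := rank_setU1 M (y b |: (C' :\ e)) (y j).
by move=> le eq; rewrite -ltnS -eq.
Qed.

Lemma circuit_y_C' c : r (y c |: C') = #|C'| -> circuit M (y c |: C').
Proof.
move=> hc; rewrite /circuit indep_rankE hc cardsU1 y_notin_C' (ltn_eqF (ltnSn _)) /=.
apply/forallP => e; apply/implyP; rewrite in_setU1 => /predU1P[->|eC].
  by rewrite setU1K ?y_notin_C'.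
have ec : y c != e by apply: contraNneq (y_notin_C' c) => ->.
have yC'e : y c \notin C' :\ e by apply: contra (y_notin_C' c); apply/subsetP/subsetDl.
rewrite setU1D1 // indep_rankE eqn_leq rank_leq_card cardsU1 yC'e /=.
by have := rank_y_C'D1 c eC; rewrite (cardsD1 e C') eC.
Qed.

Lemma circuit_C'_y2 a b : a != b ->
  r (y a |: C') = #|C'|.+1 -> r (y b |: C') = #|C'|.+1 ->
  circuit M (C' :|: [set y a; y b]).
Proof.
move=> ab ha hb.
have yba : y b != y a by rewrite (inj_eq y_inj) eq_sym.
have ybC' : y b \notin y a |: C' by rewrite in_setU1 negb_or yba y_notin_C'.
have rk := rank_C'_setU_L; rewrite (rank_setU_L _ ab) setUC -setUA setUCA in rk *.
rewrite /circuit indep_rankE rk !cardsU1 ybC' y_notin_C' /= !add1n (ltn_eqF (ltnSn _)) /=.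
apply/forallP => e; apply/implyP; rewrite !in_setU1 => /predU1P[->|/predU1P[->|eC]].
- by rewrite setU1K // indep_rankE ha cardsU1 y_notin_C'.
- by rewrite setU1D1 // setU1K ?y_notin_C' // indep_rankE hb cardsU1 y_notin_C'.
have ye i : y i != e by apply: contraNneq (y_notin_C' i) => ->.
have yC'e i : y i \notin C' :\ e.
  by apply: contra (y_notin_C' i); apply/subsetP/subsetDl.
have := rank_C'D1_setU_L eC; rewrite (rank_setU_L _ ab) setUC -setUA setUCA.
rewrite !setU1D1 // indep_rankE => ->.
by rewrite !cardsU1 in_setU1 negb_or yba !yC'e (cardsD1 e C') eC.
Qed.

Lemma mem_x_C' i : (x i \in C') = (r (y i |: C') != #|C'|).
Proof.
have xD : x i \in D i by rewrite !inE eqxx orbT.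
have yD : y i \notin D i by rewrite mem_y_D eqxx.
apply/idP/idP => [xC|].
  apply/eqP => hi.
  have sZ : y i |: (C' :\ x i) \subset ~: D i.
    by rewrite subUset sub1set inE yD C'D1_subset_setC_D.
  have := cocircuit_rank_setU1 (D_cocircuit i) sZ xD.
  rewrite setUCA setD1K // hi => eq; have := rank_y_C'D1 i xC.
  by rewrite -ltnS -eq ltnn.
apply: contraR => xC.
have sZ : y i |: C' \subset ~: D i.
  rewrite subUset sub1set inE yD (subset_trans _ (C'D1_subset_setC_D i)) //.
  by rewrite subsetD1 subxx xC.
have [a ai] := exists_neq i.
have := cocircuit_rank_setU1 (D_cocircuit i) sZ (_ : y a \in D i); rewrite mem_y_D ai.
have := rank_C'_setU_L; rewrite (rank_setU_L _ (_ : i != a)) 1?eq_sym //.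
by rewrite setUC -setUA setUCA => -> /(_ isT) [->].
Qed.

Lemma circuit_con_hull_cases :
  ([set x i | i : 'I_n] \subset C /\
   forall A, A \subset L -> #|A| = 2 -> circuit M (C' :|: A))
  \/
  (exists l, [/\ [set x i | i : 'I_n] :\: C = [set x l],
     circuit M (C' :|: [set y l]) &
     forall A, A \subset L :\ y l -> #|A| = 2 -> circuit M (C' :|: A)]).
Proof.
have xC i : (x i \in C) = (r (y i |: C') != #|C'|) by rewrite -mem_x_C' inE x_notin_L.
have rk i : r (y i |: C') != #|C'| -> r (y i |: C') = #|C'|.+1.
  by rewrite -rank_C'; case: (rank_setU1_cases M C' (y i)) => ->; rewrite ?eqxx.
have circuit_pair a b :
    a != b -> x a \in C -> x b \in C -> circuit M (C' :|: [set y a; y b]).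
  by rewrite !xC => ab /rk ha /rk hb; apply: circuit_C'_y2.
case: (pickP (fun c => r (y c |: C') == #|C'|)) => [c /eqP hc|none]; last first.
  have xCi i : x i \in C by rewrite xC none.
  left; split; first by apply/subsetP => _ /imsetP[i _ ->].
  by move=> A /subset_L_card2 AL /AL[a [b [ab ->]]]; apply: circuit_pair.
have xCi i : (x i \in C) = (i != c).
  rewrite xC; case: (eqVneq i c) => [->|ic /=]; first by rewrite hc eqxx.
  by apply/eqP => hi; case/eqP: ic; apply: spanned_y_unique hi hc.
right; exists c; split.
- apply/setP => z; rewrite !inE; apply/andP/eqP => [[zC /imsetP[i _ zi]]|->].
    by move: zC; rewrite zi xCi negbK => /eqP->.
  by rewrite xCi eqxx imset_f.
- by rewrite setUC; apply: circuit_y_C'.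
move=> A sA /(subset_L_card2 (subset_trans sA (subsetDl _ _)))[a [b [ab eA]]].
have yA i : y i \in A -> x i \in C.
  by rewrite xCi => yi; apply: contraTneq (subsetP sA _ yi) => ->; rewrite !inE eqxx.
by rewrite eA; apply: circuit_pair; rewrite // yA // eA !inE eqxx ?orbT.
Qed.

End ContractedCircuit.
End Carambole.

Theorem proposition4p2 (E : finType) (M : matroid E) (n : nat) (x y : 'I_n -> E)
  (C : {set E}) :
  three_connected M -> simple M -> 4 <= rank M setT ->
  carambole M x y ->
  let L := [set y i | i : 'I_n] in
  let X := [set x i | i : 'I_n] in
  circuit M C -> ~~ (C \subset L) ->
  ( (C :&: (X :|: L) != set0) ->
      ( (X \subset C /\
         forall A : {set E}, A \subset L -> #|A| = 2 -> circuit M ((C :\: L) :|: A))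
      \/
        (exists l : 'I_n,
          [/\ X :\: C = [set x l],
              circuit M ((C :\: L) :|: [set y l]) &
              forall A : {set E}, A \subset L :\ y l -> #|A| = 2 ->
                circuit M ((C :\: L) :|: A)]) ) )
  /\ circuit_con M L (C :\: L).
Proof.
move=> conn3 [_ pair_indep] rank4 [n_gt2 y_inj /eqP rank_L _ D_cocircuit] L X cC nCL.
have n_gt1 : 1 < n by apply: ltnW.
have x_notin_L i : x i \notin L.
  apply: contra (cocircuit_not_subset (three_connected_rank_setC conn3 rank_L rank4)
                   (D_cocircuit i)).
  by move=> xL; rewrite subUset sub1set xL subsetDl.
have C'_con : circuit_con M L (C :\: L) by apply: circuit_setD_L_con.
split=> // meet.
by apply: circuit_con_hull_cases => //; apply: circuit_meet_hull_indep.
Qed.
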